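(* Let $K\subseteq\mathbb{R}^n$ be a proper cone and $A\in\mathbb{R}^{n\times n}$ nonsingular, $b\in\mathbb{R}^n$. Let $A=U-V$ be a convergent $K$-regular splitting and let $U=F-G$ be a convergent $K$-weak regular splitting of type II such that $VF^{-1}G=GF^{-1}V$. Then for any sequence of positive integers $s(k)\geq 1$, $k=0,1,2,\ldots$, and any initial vector $x_0$, the non-stationary two-stage iteration $$x_{k+1}=(F^{-1}G)^{s(k)}x_{k}+\sum_{j=0}^{s(k)-1}(F^{-1}G)^{j}F^{-1}(Vx_{k}+b),\qquad k=0,1,2,\ldots,$$ converges (to $A^{-1}b$).
   Context: A proper cone $K\subseteq\mathbb{R}^n$ is a closed, convex, pointed, solid cone. For $M\in\mathbb{R}^{n\times n}$, $M\geq_K 0$ means $MK\subseteq K$. A splitting $A=U-V$ (with $U$ nonsingular) is $K$-regular if $U^{-1}\geq_K 0$ and $V\geq_K 0$; it is a $K$-weak regular splitting of type II if $U^{-1}\geq_K 0$ and $VU^{-1}\geq_K 0$. A splitting is convergent if $\rho(U^{-1}V)<1$, $\rho$ denoting spectral radius. *)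

From HB Require Import structures.
From mathcomp Require Import all_boot all_order all_algebra.
From mathcomp Require Import all_classical all_reals all_analysis.
From mathcomp Require Import complex.

Set Implicit Arguments.
Unset Strict Implicit.
Unset Printing Implicit Defensive.

Import Order.TTheory GRing.Theory Num.Theory numFieldTopology.Exports numFieldNormedType.Exports.
Local Open Scope ring_scope.
Local Open Scope classical_set_scope.

Section Defs.
Variables (R : realType) (n : nat).

Definition is_cone (K : set 'cV[R]_n) : Prop :=
  forall (a : R) (x : 'cV[R]_n), 0 <= a -> K x -> K (a *: x).

Definition is_convex_set (K : set 'cV[R]_n) : Prop :=
  forall (t : R) (x y : 'cV[R]_n), 0 <= t -> t <= 1 -> K x -> K y ->
    K (t *: x + (1 - t) *: y).

Definition is_pointed (K : set 'cV[R]_n) : Prop :=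
  forall x : 'cV[R]_n, K x -> K (- x) -> x = 0.

Definition is_solid (K : set 'cV[R]_n) : Prop := (interior K) !=set0.

Definition proper_cone (K : set 'cV[R]_n) : Prop :=
  [/\ is_cone K, closed K, is_convex_set K, is_pointed K & is_solid K].

Definition K_nonneg (K : set 'cV[R]_n) (M : 'M[R]_n) : Prop :=
  forall x : 'cV[R]_n, K x -> K (M *m x).

Definition spectral_radius_lt1 (M : 'M[R]_n) : Prop :=
  forall l : complex R, eigenvalue (map_mx (fun r : R => Complex r 0) M) l -> `|l| < 1.

Definition K_regular_splitting (K : set 'cV[R]_n) (A U V : 'M[R]_n) : Prop :=
  [/\ A = U - V, U \in unitmx, K_nonneg K (invmx U) & K_nonneg K V].

Definition K_weak_regular_splitting_II (K : set 'cV[R]_n) (A U V : 'M[R]_n) : Prop :=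
  [/\ A = U - V, U \in unitmx, K_nonneg K (invmx U) & K_nonneg K (V *m invmx U)].

Definition convergent_splitting (U V : 'M[R]_n) : Prop :=
  spectral_radius_lt1 (invmx U *m V).

End Defs.

From HB Require Import structures.
From mathcomp Require Import all_boot all_order all_algebra.
From mathcomp Require Import all_classical all_reals all_analysis.
From mathcomp Require Import complex.
From mathcomp Require Import ring lra.
Set Implicit Arguments.
Unset Strict Implicit.
Unset Printing Implicit Defensive.
Import Order.TTheory GRing.Theory Num.Theory numFieldTopology.Exports numFieldNormedType.Exports.
Local Open Scope ring_scope.
Local Open Scope classical_set_scope.

(* Write P := G F^-1 and Q := V F^-1, both K-nonnegative.  The errors
   e_k := F (x_k - A^-1 b) satisfy e_(k+1) = N_(s k) e_k with the K-nonnegative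
   matrices N_m := P^m + sum_(j<m) P^j Q.  Powers of a matrix of spectral radius
   < 1 tend to 0 (Cayley-Hamilton over the complexification), so Neumann series
   show that F U^-1 = (1 - P)^-1 and U A^-1 are K-nonnegative.  Hence, for u
   interior to K, z := F A^-1 u lies in K and z - P z - Q z = u.  As u dominates
   some eps z, every N_(m+1) maps z below theta z with theta := 1 - eps < 1, so
   e_k stays in the order interval [-c theta^k z, c theta^k z]; since K is closed
   and pointed, such intervals have Euclidean size O(theta^k). *)

Section MatrixAlgebra.
Variables (R : pzRingType) (n : nat).
Implicit Types M N F : 'M[R]_n.

Lemma expmx_intertwine M N F k : M *m F = F *m N -> M ^+ k *m F = F *m N ^+ k.
Proof.
move=> MF; elim: k => [|k IH]; first by rewrite !expr0 mul1mx mulmx1.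
by rewrite !exprSr -!mulmxE -mulmxA MF !mulmxA IH.
Qed.

Lemma sum_expmx_mul_subr M k : \sum_(j < k) M ^+ j *m (1 - M) = 1 - M ^+ k.
Proof.
elim: k => [|k IH]; first by rewrite big_ord0 expr0 subrr.
rewrite big_ord_recr /= IH mulmxBr mulmx1 exprSr -mulmxE.
by rewrite addrA subrK.
Qed.

End MatrixAlgebra.

Section Convergence.
Variable R : realType.

Lemma cvg0_norm_le (V : normedModType R) (u : nat -> V) (a : nat -> R) :
  (forall k, `|u k| <= a k) -> a @ \oo --> 0 -> u @ \oo --> 0.
Proof.
move=> ua a0; apply/norm_cvg0P; apply: (squeeze_cvgr _ (cvg_cst 0) a0).
by apply: nearW => k; rewrite normr_ge0 ua.
Qed.

Lemma perturbed_contraction_cvg0 (a b : nat -> R) (c : R) :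
  0 <= c < 1 -> (forall k, 0 <= a k) -> (forall k, a k.+1 <= c * a k + b k) ->
  b @ \oo --> 0 -> a @ \oo --> 0.
Proof.
move=> /andP[c0 c1] a0 ab /cvgrPdist_le b0; apply/cvgrPdist_le => e e0.
have e1 : 0 < e / 2 * (1 - c) by rewrite mulr_gt0 ?divr_gt0 ?subr_gt0.
have [N _ bN] := b0 _ e1.
have aN m : a (N + m)%N <= c ^+ m * a N + e / 2.
  elim: m => [|m IH]; first by rewrite addn0 expr0 mul1r lerDl divr_ge0 // ltW.
  have bm : b (N + m)%N <= e / 2 * (1 - c).
    by have := bN _ (leq_addr m N); rewrite sub0r normrN; apply: le_trans; exact: ler_norm.
  rewrite addnS exprSr; apply: le_trans (ab _) _.
  have := ler_wpM2l c0 IH; lra.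
have /cvgrPdist_le /(_ _ (divr_gt0 e0 (ltr0n _ 2))) [M _ cM] :
    (fun m => c ^+ m * a N) @ \oo --> 0.
  by rewrite -(mul0r (a N)); apply: cvgM; [apply: cvg_expr; rewrite ger0_norm | exact: cvg_cst].
exists (N + M)%N => // k /= Mk; rewrite sub0r normrN ger0_norm //.
have Nk : (N <= k)%N := leq_trans (leq_addr M N) Mk.
rewrite -(subnKC Nk); apply: le_trans (aN _) _.
have := cM (k - N)%N; rewrite /= sub0r normrN ger0_norm ?mulr_ge0 ?exprn_ge0 //.
rewrite leq_subRL // => /(_ Mk); lra.
Qed.

Lemma mulmx_norm_le m p (B : 'M[R]_(m, p)) (v : 'cV[R]_p) :
  `|B *m v| <= (\sum_i \sum_j `|B i j|) * `|v|.
Proof.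
have entry_le (w : 'cV[R]_p) k : `|w k 0| <= `|w|.
  by rewrite [leRHS]mx_normrE; exact: (le_bigmax _ (fun kl => `|w kl.1 kl.2|) (k, 0)).
rewrite [leLHS]mx_normrE; apply: bigmax_le => [|[i j] _ /=].
  by rewrite mulr_ge0 // sumr_ge0 // => i _; rewrite sumr_ge0.
rewrite mxE (ord1 j); apply: le_trans (ler_norm_sum _ _ _) _.
apply: le_trans (_ : \sum_k `|B i k| * `|v| <= _).
  by apply: ler_sum => k _; rewrite normrM ler_wpM2l // entry_le.
rewrite -mulr_suml ler_wpM2r // (bigD1 i) //= lerDl.
by apply: sumr_ge0 => k _; rewrite sumr_ge0.
Qed.

Lemma mulmx_cvg0 m p (B : 'M[R]_(m, p)) (u : nat -> 'cV[R]_p) :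
  u @ \oo --> (0 : 'cV_p) -> (fun k => B *m u k) @ \oo --> (0 : 'cV_m).
Proof.
move=> /norm_cvg0P u0.
apply: (cvg0_norm_le (a := fun k => (\sum_i \sum_j `|B i j|) * `|u k|)) => [k|].
  exact: mulmx_norm_le.
by rewrite -[X in _ --> X](mulr0 (\sum_i \sum_j `|B i j|)); exact: cvgMl_tmp.
Qed.

Lemma expmx_cvg0_similar m (M N F : 'M[R]_m) :
  F \in unitmx -> M *m F = F *m N ->
  (forall x, (fun k => N ^+ k *m x) @ \oo --> (0 : 'cV_m)) ->
  forall x, (fun k => M ^+ k *m x) @ \oo --> (0 : 'cV_m).
Proof.
move=> Fu MF N0 x; have -> : (fun k => M ^+ k *m x) = (fun k => F *m (N ^+ k *m (invmx F *m x))).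
  by apply: funext => k; rewrite !mulmxA -(expmx_intertwine k MF) mulmxK.
exact/mulmx_cvg0/N0.
Qed.

Lemma unitmx_subr_expmx_cvg0 n (M : 'M[R]_n) :
  (forall x, (fun k => M ^+ k *m x) @ \oo --> (0 : 'cV_n)) -> (1 - M) \in unitmx.
Proof.
move=> M0; rewrite -unitmx_tr -row_free_unit; apply: inj_row_free => v vM.
have My : M *m v^T = v^T.
  apply/eqP; rewrite eq_sym -subr_eq0 -{1}[v^T]mul1mx -mulmxBl.
  by apply/eqP/trmx_inj; rewrite trmx_mul trmxK trmx0; exact: vM.
have Mky k : M ^+ k *m v^T = v^T.
  by elim: k => [|k IH]; rewrite ?expr0 ?mul1mx // exprSr -mulmxE -mulmxA My.
have := M0 v^T; under eq_fun do rewrite Mky.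
by move=> /(norm_cvg_unique (cvg_cst v^T)) v0; rewrite -[v]trmxK v0 trmx0.
Qed.

Lemma normc_ge0 (z : R[i]) : 0 <= Normc.normc z.
Proof. by case: z => a b; exact: sqrtr_ge0. Qed.

(* The norm of [R[i]] is [R[i]]-valued; [cnorm1] is a real-valued l1 norm on complex vectors. *)
Definition cnorm1 m (v : 'cV[R[i]]_m) : R := \sum_i Normc.normc (v i 0).

Lemma cnorm1_ge0 m (v : 'cV[R[i]]_m) : 0 <= cnorm1 v.
Proof. by apply: sumr_ge0 => i _; exact: normc_ge0. Qed.

Lemma cnorm1D m (v w : 'cV[R[i]]_m) : cnorm1 (v + w) <= cnorm1 v + cnorm1 w.
Proof. by rewrite -big_split; apply: ler_sum => i _; rewrite mxE; exact: le_normcD. Qed.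

Lemma cnorm1Z m a (v : 'cV[R[i]]_m) : cnorm1 (a *: v) = Normc.normc a * cnorm1 v.
Proof. by rewrite /cnorm1 mulr_sumr; apply: eq_bigr => i _; rewrite mxE Normc.normcM. Qed.

Lemma norm_le_cnorm1 m (v : 'cV[R]_m) : `|v| <= cnorm1 (map_mx (real_complex R) v).
Proof.
rewrite [leLHS]mx_normrE; apply: bigmax_le => [|[i j] _ /=]; first exact: cnorm1_ge0.
rewrite /cnorm1 (bigD1 i) //= mxE (ord1 j) /Normc.normc /= expr0n addr0 sqrtr_sqr lerDl.
by apply: sumr_ge0 => k _; exact: normc_ge0.
Qed.

Lemma expmx_cvg0_annihilated m (C : 'M[R[i]]_m) (s : seq R[i]) :
  (forall z, z \in s -> Normc.normc z < 1) ->
  forall v, (\prod_(z <- s) (C - z%:M)) *m v = 0 ->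
  (fun k => cnorm1 (C ^+ k *m v)) @ \oo --> 0.
Proof.
elim/last_ind: s => [|s z IH] s_lt1 v.
  rewrite big_nil mul1mx => ->.
  have cnorm1_0 : cnorm1 (0 : 'cV_m) = 0.
    by rewrite -(scale0r (0 : 'cV_m)) cnorm1Z Normc.normc0 mul0r.
  by under eq_fun do rewrite mulmx0 cnorm1_0; exact: cvg_cst.
rewrite big_rcons /= -mulmxE -mulmxA => sw.
have z_lt1 : Normc.normc z < 1 by apply: s_lt1; rewrite mem_rcons mem_head.
set w := (C - z%:M) *m v in sw.
have w0 : (fun k => cnorm1 (C ^+ k *m w)) @ \oo --> 0.
  by apply: IH sw => y ys; apply: s_lt1; rewrite mem_rcons inE ys orbT.
apply: (perturbed_contraction_cvg0 (c := Normc.normc z) _ (fun k => cnorm1_ge0 _) _ w0).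
  by rewrite normc_ge0 z_lt1.
move=> k; have -> : C ^+ k.+1 *m v = z *: (C ^+ k *m v) + C ^+ k *m w.
  by rewrite /w mulmxBl mulmxBr mul_scalar_mx scalemxAr exprSr -mulmxE mulmxA addrC subrK.
by apply: le_trans (cnorm1D _ _) _; rewrite cnorm1Z.
Qed.

Lemma expmx_cvg0 n (M : 'M[R]_n) : spectral_radius_lt1 M ->
  forall x, (fun k => M ^+ k *m x) @ \oo --> (0 : 'cV_n).
Proof.
case: n M => [|m] M rhoM x.
  by under eq_fun do rewrite flatmx0; exact: cvg_cst.
pose C := map_mx (real_complex R) M.
have [r charC] := closed_field_poly_normal (char_poly C).
rewrite (monicP (char_poly_monic C)) scale1r in charC.
have r_lt1 z : z \in r -> Normc.normc z < 1.
  move=> zr; have := rhoM z; rewrite eigenvalue_root_char -/C charC root_prod_XsubC.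
  by move=> /(_ zr); case: z {zr} => a b; rewrite normc_def /= -ltcR.
have annihilates : (\prod_(z <- r) (C - z%:M)) *m map_mx (real_complex R) x = 0.
  suff -> : \prod_(z <- r) (C - z%:M) = 0 by rewrite mul0mx.
  have := Cayley_Hamilton C; rewrite charC rmorph_prod => <-.
  by apply: eq_bigr => z _; rewrite rmorphB /= horner_mx_X horner_mx_C.
apply: cvg0_norm_le (expmx_cvg0_annihilated r_lt1 annihilates) => k.
by rewrite -rmorphXn -map_mxM; exact: norm_le_cnorm1.
Qed.

End Convergence.

Section Cone.
Variables (R : realType) (n : nat) (K : set 'cV[R]_n).
Hypotheses (K_cone : is_cone K) (K_convex : is_convex_set K).

Lemma coneD x y : K x -> K y -> K (x + y).
Proof.
move=> Kx Ky; have half_ge0 : (0 : R) <= 2^-1 by rewrite invr_ge0.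
have half_le1 : (2^-1 : R) <= 1 by rewrite invf_le1 // ler1n.
have := K_cone (ler0n _ 2) (K_convex half_ge0 half_le1 Kx Ky).
rewrite [1 - _](_ : _ = 2^-1); last by rewrite {1}(splitr 1) mul1r addrK.
by rewrite scalerDr !scalerA divff ?pnatr_eq0 // !scale1r.
Qed.

Lemma cone_sum k (f : 'I_k -> 'cV[R]_n) : K 0 -> (forall j, K (f j)) -> K (\sum_j f j).
Proof.
move=> K0 Kf; elim/big_ind: _ => // x y; exact: coneD.
Qed.

Lemma K_nonneg_mul M N : K_nonneg K M -> K_nonneg K N -> K_nonneg K (M *m N).
Proof. by move=> KM KN x Kx; rewrite -mulmxA; apply/KM/KN. Qed.

Lemma K_nonneg_exp M k : K_nonneg K M -> K_nonneg K (M ^+ k).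
Proof.
move=> KM; elim: k => [|k IH] x Kx; first by rewrite expr0 mul1mx.
by rewrite exprS -mulmxE -mulmxA; apply/KM/IH.
Qed.

Lemma K_nonneg_add M N : K_nonneg K M -> K_nonneg K N -> K_nonneg K (M + N).
Proof. by move=> KM KN x Kx; rewrite mulmxDl; apply: coneD; [apply: KM | apply: KN]. Qed.

Lemma K_nonneg_sum k (M : 'I_k -> 'M[R]_n) : K 0 ->
  (forall j, K_nonneg K (M j)) -> K_nonneg K (\sum_j M j).
Proof. by move=> K0 KM x Kx; rewrite mulmx_suml; apply: cone_sum => // j; apply: KM. Qed.

Definition order_interval (z : 'cV[R]_n) (c : R) (v : 'cV[R]_n) :=
  K (c *: z - v) /\ K (c *: z + v).

Lemma order_interval_widen z z' c c' v : K (c' *: z' - c *: z) ->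
  order_interval z c v -> order_interval z' c' v.
Proof.
move=> Kz [Kminus Kplus]; split.
- by rewrite -(subrK (c *: z) (c' *: z')) -addrA; apply: coneD.
- by rewrite -(subrK (c *: z) (c' *: z')) -addrA; apply: coneD.
Qed.

Lemma order_intervalZ z c v t : 0 <= t ->
  order_interval z c v -> order_interval z (t * c) (t *: v).
Proof.
move=> t0 [Kminus Kplus].
by rewrite /order_interval -scalerA -scalerBr -scalerDr; split; apply: K_cone.
Qed.

Lemma order_interval_mulmx M z c v theta : K_nonneg K M ->
  K (theta *: z - M *m z) -> 0 <= c ->
  order_interval z c v -> order_interval z (c * theta) (M *m v).
Proof.
move=> KM Kz c0 [Kminus Kplus].
have KcMz : K (c *: (theta *: z - M *m z)) by apply: K_cone.
rewrite /order_interval -scalerA; split.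
- have -> : c *: (theta *: z) - M *m v = c *: (theta *: z - M *m z) + M *m (c *: z - v).
    by rewrite mulmxBr -scalemxAr scalerBr addrA subrK.
  by apply: coneD => //; apply: KM.
- have -> : c *: (theta *: z) + M *m v = c *: (theta *: z - M *m z) + M *m (c *: z + v).
    by rewrite mulmxDr -scalemxAr scalerBr addrA subrK.
  by apply: coneD => //; apply: KM.
Qed.

End Cone.

Section Neumann.
Variables (R : realType) (n : nat) (K : set 'cV[R]_n).
Hypotheses (K_cone : is_cone K) (K_convex : is_convex_set K) (K_closed : closed K).
Hypothesis K0 : K 0.

Lemma K_nonneg_inv_subr (M : 'M[R]_n) : K_nonneg K M ->
  (forall x, (fun k => M ^+ k *m x) @ \oo --> (0 : 'cV_n)) ->
  K_nonneg K (invmx (1 - M)).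
Proof.
move=> KM M0 x Kx; set y := invmx (1 - M) *m x.
have partial_sum k : \sum_(j < k) M ^+ j *m x = y - M ^+ k *m y.
  have -> : x = (1 - M) *m y by rewrite mulKVmx // unitmx_subr_expmx_cvg0.
  by rewrite -mulmx_suml mulmxA mulmx_suml sum_expmx_mul_subr mulmxBl mul1mx.
apply: (@closed_cvg _ _ \oo _ (fun k => y - M ^+ k *m y) K K_closed).
  apply: nearW => k; rewrite -partial_sum.
  by apply: cone_sum => // j; apply: K_nonneg_exp.
by rewrite -[X in _ --> X]subr0; apply: cvgB; [exact: cvg_cst | exact: M0].
Qed.

Lemma splitting_K_nonneg_inv (U V : 'M[R]_n) : U \in unitmx ->
  K_nonneg K (V *m invmx U) -> convergent_splitting U V ->
  (U - V) \in unitmx /\ K_nonneg K (U *m invmx (U - V)).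
Proof.
move=> Uu KVU rhoUV; set M := V *m invmx U.
have MU : M *m U = U *m (invmx U *m V) by rewrite mulmxKV // mulKVmx.
have M0 := expmx_cvg0_similar Uu MU (expmx_cvg0 rhoUV).
have Mu := unitmx_subr_expmx_cvg0 M0.
have UV : U - V = (1 - M) *m U by rewrite mulmxBl mul1mx mulmxKV.
have UVu : (U - V) \in unitmx by rewrite UV unitmx_mul Mu Uu.
have -> : U *m invmx (U - V) = invmx (1 - M).
  by rewrite -[LHS](mulKmx Mu) [X in _ *m X]mulmxA -UV mulmxV // mulmx1.
by split => //; apply: K_nonneg_inv_subr.
Qed.

End Neumann.

Section Compactness.
Variable R : realType.

Lemma trmx_norm m p (A : 'M[R]_(m, p)) : `|A^T| = `|A|.
Proof.
change (mx_norm A^T = mx_norm A); rewrite !mx_normrE.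
rewrite -(pair_bigA_idem (maxxx 0) (fun i j => `|A^T i j|)).
rewrite -(pair_bigA_idem (maxxx 0) (fun i j => `|A i j|)).
rewrite exchange_big_idem; last exact: maxxx.
by under eq_bigr do under eq_bigr do rewrite mxE.
Qed.

Lemma trmx_continuous m p : continuous (fun A : 'M[R]_(m, p) => A^T).
Proof.
move=> A; apply/(@cvgrPdist_lt _ _ _ (nbhs A) (nbhs_filter A)) => e e0.
near=> B; rewrite -linearB trmx_norm; near: B.
exact: (@cvgr_dist_lt _ _ _ (nbhs A) (nbhs_filter A) id).
Unshelve. all: by end_near.
Qed.

Lemma sphere_compact n : compact [set v : 'cV[R]_n | `|v| = 1].
Proof.
have -> : [set v : 'cV[R]_n | `|v| = 1] = trmx @` [set w : 'rV[R]_n | `|w| = 1].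
  apply/seteqP; split => [v v1 | _ [w w1 <-]] /=; last by rewrite trmx_norm.
  by exists v^T; rewrite ?trmxK // trmx_norm.
apply: continuous_compact.
  exact/continuous_subspaceT/trmx_continuous.
apply: bounded_closed_compact.
  by exists 1; split => // r r1 w /= ->; exact: ltW.
rewrite (_ : [set w | _] = (fun w : 'rV[R]_n => `|w|) @^-1` [set x | x = 1]) //.
by apply: preimage_closed; [move=> w _; exact: norm_continuous | exact: closed_eq].
Qed.

Lemma closed_cluster_shift (V : normedModType R) (S : set V) (a g : nat -> V) p :
  closed S -> (forall m, S (a m + g m)) -> a @ \oo --> 0 -> cluster (g @ \oo) p -> S p.
Proof.
move=> S_closed Sag /cvgrPdist_lt a0 gp; apply: S_closed => B /nbhs_ballP [e e0 peB].
have e2 : 0 < e / 2 by rewrite divr_gt0.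
have [N _ aN] := a0 _ e2.
have gN : (g @ \oo) (g @` [set m | (N <= m)%N]) by exists N => // m Nm; exists m.
have [_ [[m Nm <-] pgm]] := gp _ _ gN (nbhsx_ballx p _ e2).
exists (a m + g m); split => //; apply: peB; rewrite -ball_normE /=.
move: pgm (aN m Nm); rewrite -ball_normE /= sub0r normrN => pgm am.
rewrite opprD (addrC (- a m)) addrA (splitr e).
by apply: le_lt_trans (ler_normB _ _) _; rewrite ltrD.
Qed.

End Compactness.

Section ConeNorm.
Variables (R : realType) (n : nat) (K : set 'cV[R]_n).
Hypotheses (K_cone : is_cone K) (K_convex : is_convex_set K).

Lemma interior_absorbing u v : interior K u -> exists2 c, 0 < c & K (c *: u + v).
Proof.
move=> /nbhs_ballP [r r0 ruK]; pose c := (`|v| + 1) / r.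
have c0 : 0 < c by rewrite divr_gt0 // ltr_wpDl.
exists c => //; rewrite -[v](scalerKV (lt0r_neq0 c0)) -scalerDr; apply: K_cone (ltW c0) _.
apply: ruK; rewrite -ball_normE /= opprD addrA subrr sub0r normrN normrZ.
rewrite gtr0_norm ?invr_gt0 // /c invf_div mulrAC ltr_pdivrMr ?ltr_wpDl //.
by rewrite ltr_pM2l // ltrDl.
Qed.

Lemma interior_order_interval u v : interior K u ->
  exists2 c, 0 < c & order_interval K u c v.
Proof.
move=> uK; have Ku := interior_subset uK.
have [c1 c10 Kc1] := interior_absorbing (- v) uK.
have [c2 c20 Kc2] := interior_absorbing v uK.
exists (c1 + c2); first exact: addr_gt0.
split; rewrite scalerDl.
- by rewrite addrAC; apply: coneD => //; apply: K_cone (ltW c20) Ku.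
- by rewrite -addrA; apply: coneD => //; apply: K_cone (ltW c10) Ku.
Qed.

Lemma interior_sub_scale u z : interior K u -> exists2 eps, 0 < eps <= 1 & K (u - eps *: z).
Proof.
move=> uK; have [c c0 [Kcz _]] := interior_order_interval z uK.
have c1 : 0 < 1 + c by rewrite addr_gt0.
exists (1 + c)^-1; first by rewrite invr_gt0 c1 invf_le1 // lerDl ltW.
have -> : u - (1 + c)^-1 *: z = (1 + c)^-1 *: ((1 + c) *: u - z).
  by rewrite scalerBr scalerA mulVf ?gt_eqF // scale1r.
apply: K_cone; first by rewrite invr_ge0 ltW.
by rewrite scalerDl scale1r -addrA; apply: coneD => //; exact: interior_subset.
Qed.

Hypotheses (K_closed : closed K) (K_pointed : is_pointed K).

Lemma order_interval_norm_bound z : exists2 C, 0 < C &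
  forall c v, 0 <= c -> order_interval K z c v -> `|v| <= C * c.
Proof.
(* Otherwise normalized counterexamples g_m have a cluster point p on the unit
   sphere with both p and -p in K. *)
apply: contrapT => noC.
have bad m : exists cv : R * 'cV[R]_n,
    [/\ 0 <= cv.1, order_interval K z cv.1 cv.2 & m.+1%:R * cv.1 < `|cv.2|].
  apply: contrapT => none; apply: noC; exists m.+1%:R => // c v c0 cv.
  by rewrite leNgt; apply/negP => cv_big; apply: none; exists (c, v).
have [cv cvP] := choice bad; pose c m := (cv m).1; pose v m := (cv m).2.
have c0 m : 0 <= c m by have [] := cvP m.
have v_big m : m.+1%:R * c m < `|v m| by have [] := cvP m.
have v_gt0 m : 0 < `|v m| by apply: le_lt_trans (v_big m); rewrite mulr_ge0.
pose d m := `|v m|^-1 * c m; pose g m := `|v m|^-1 *: v m.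
have g1 m : `|g m| = 1 by rewrite normrZ normfV normr_id mulVf ?gt_eqF.
have gK m : order_interval K z (d m) (g m).
  by apply: order_intervalZ; [|rewrite invr_ge0 ltW|have [] := cvP m].
have dz0 : (fun m => d m *: z) @ \oo --> (0 : 'cV_n).
  apply: (cvg0_norm_le (a := fun m => harmonic m * `|z|)).
    move=> m; rewrite normrZ ler_wpM2r // ger0_norm ?mulr_ge0 ?invr_ge0 //.
    rewrite /harmonic /d mulrC ler_pdivrMr // ler_pdivlMl ?ltr0Sn //.
    exact: ltW.
  by rewrite -(mul0r `|z|); apply: cvgMr_tmp; exact: cvg_harmonic.
have [p [p1 gp]] : [set w : 'cV_n | `|w| = 1] `&` cluster (g @ \oo) !=set0.
  by apply: sphere_compact; exists 0%N => // m _; exact: g1.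
have Kp : K p := closed_cluster_shift K_closed (fun m => (gK m).2) dz0 gp.
have KNp : K (- p).
  apply: (@closed_cluster_shift _ _ [set w | K (- w)] (fun m => - (d m *: z)) g).
  - by apply: preimage_closed => // w _; exact: opp_continuous.
  - by move=> m /=; rewrite opprD opprK; have [] := gK m.
  - by rewrite -oppr0; exact: cvgN.
  - exact: gp.
by move: p1; rewrite (K_pointed Kp KNp) /= normr0 => /eqP; rewrite eq_sym oner_eq0.
Qed.

Lemma cone_contraction_cvg0 z theta c (M : nat -> 'M[R]_n) (e : nat -> 'cV[R]_n) :
  0 <= theta < 1 -> 0 <= c -> (forall k, K_nonneg K (M k)) ->
  (forall k, K (theta *: z - M k *m z)) -> (forall k, e k.+1 = M k *m e k) ->
  order_interval K z c (e 0%N) -> e @ \oo --> (0 : 'cV_n).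
Proof.
move=> /andP[theta0 theta1] c0 KM KMz e_rec e0.
have [C C0 normC] := order_interval_norm_bound z.
have ek k : order_interval K z (c * theta ^+ k) (e k).
  elim: k => [|k IH]; first by rewrite expr0 mulr1.
  rewrite e_rec exprSr mulrA; apply: order_interval_mulmx => //.
  by rewrite mulr_ge0 ?exprn_ge0.
apply: (cvg0_norm_le (a := fun k => C * (c * theta ^+ k))) => [k|].
  by apply: normC (ek k); rewrite mulr_ge0 ?exprn_ge0.
rewrite -[X in _ --> X](mulr0 C) -[X in _ --> C * X](mulr0 c).
by do 2 apply: cvgMl_tmp; apply: cvg_expr; rewrite ger0_norm.
Qed.

End ConeNorm.

Section TwoStageIteration.
Variables (R : comUnitRingType) (n : nat).
Implicit Types (P Q : 'M[R]_n).

Definition two_stage_mx P Q (m : nat) := P ^+ m + \sum_(j < m) P ^+ j *m Q.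

Lemma two_stage_mxS P Q m : two_stage_mx P Q m.+1 = P *m two_stage_mx P Q m + Q.
Proof.
rewrite /two_stage_mx big_ord_recl expr0 mul1mx mulmxDr mulmx_sumr exprS -mulmxE.
have -> : \sum_(i < m) P ^+ (lift ord0 i) *m Q = \sum_(i < m) P *m (P ^+ i *m Q).
  by apply: eq_bigr => i _; rewrite mulmxA lift0 exprS mulmxE.
by rewrite [Q + _]addrC addrA.
Qed.

Lemma two_stage_error (A U V F G : 'M[R]_n) (b xs y : 'cV[R]_n) s :
  F \in unitmx -> A = U - V -> U = F - G -> A *m xs = b ->
  F *m ((invmx F *m G) ^+ s *m y
        + \sum_(j < s) (invmx F *m G) ^+ j *m invmx F *m (V *m y + b) - xs)
  = two_stage_mx (G *m invmx F) (V *m invmx F) s *m (F *m (y - xs)).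
Proof.
move=> Fu defA defU Axb; set P := G *m invmx F.
have PF : P *m F = F *m (invmx F *m G) by rewrite mulmxKV // mulKVmx.
have FT j w : F *m ((invmx F *m G) ^+ j *m w) = P ^+ j *m (F *m w).
  by rewrite !mulmxA (expmx_intertwine j PF).
have FTF j w : F *m ((invmx F *m G) ^+ j *m invmx F *m w) = P ^+ j *m w.
  by rewrite -mulmxA FT mulKVmx.
have Fxs : F *m xs = P ^+ s *m (F *m xs) + \sum_(j < s) P ^+ j *m (V *m xs + b).
  have -> : V *m xs + b = (1 - P) *m (F *m xs).
    by rewrite mulmxA mulmxBl mul1mx mulmxKV // -defU -Axb defA mulmxBl addrC subrK.
  under eq_bigr do rewrite mulmxA.
  by rewrite -mulmx_suml sum_expmx_mul_subr mulmxBl mul1mx addrC subrK.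
rewrite mulmxBr mulmxDr FT mulmx_sumr; under eq_bigr do rewrite FTF.
rewrite {1}Fxs opprD addrACA -mulmxBr -sumrB /two_stage_mx mulmxDl mulmx_suml -mulmxBr.
congr (_ + _); apply: eq_bigr => j _.
by rewrite -mulmxBr -!mulmxA mulKmx // opprD addrACA subrr addr0 -mulmxBr.
Qed.

End TwoStageIteration.

Section TwoStageContraction.
Variables (R : realType) (n : nat) (K : set 'cV[R]_n).
Hypotheses (K_cone : is_cone K) (K_convex : is_convex_set K).
Variables (P Q : 'M[R]_n).
Hypothesis KP : K_nonneg K P.

Lemma K_nonneg_two_stage_mx m : K 0 -> K_nonneg K Q -> K_nonneg K (two_stage_mx P Q m).
Proof.
move=> K0 KQ; apply: K_nonneg_add => //; first exact: K_nonneg_exp.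
by apply: K_nonneg_sum => // j; apply: K_nonneg_mul => //; exact: K_nonneg_exp.
Qed.

Lemma two_stage_mx_contraction z theta : K z -> theta <= 1 ->
  K (theta *: z - P *m z - Q *m z) ->
  forall m, K (theta *: z - two_stage_mx P Q m.+1 *m z).
Proof.
move=> Kz theta1 Kz_theta.
have step m t : K (t *: z - P *m z - Q *m z) -> K (z - two_stage_mx P Q m *m z) ->
    K (t *: z - two_stage_mx P Q m.+1 *m z).
  move=> Kt Kz_m; rewrite two_stage_mxS mulmxDl -mulmxA.
  have -> : t *: z - (P *m (two_stage_mx P Q m *m z) + Q *m z)
      = (t *: z - P *m z - Q *m z) + P *m (z - two_stage_mx P Q m *m z).
    rewrite mulmxBr; move: (t *: z) (P *m z) (Q *m z) (P *m _) => w a b c.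
    by apply/matrixP => i j; rewrite !mxE; ring.
  by apply: coneD => //; apply: KP.
have Kz1 : K (1 *: z - P *m z - Q *m z).
  have -> : 1 *: z - P *m z - Q *m z = (1 - theta) *: z + (theta *: z - P *m z - Q *m z).
    by rewrite scalerBl !addrA subrK.
  by apply: coneD => //; apply: K_cone; rewrite ?subr_ge0.
have Kz_m m : K (z - two_stage_mx P Q m *m z).
  elim: m => [|m IH].
    by rewrite /two_stage_mx expr0 big_ord0 addr0 mul1mx subrr -(scale0r z); exact: K_cone.
  by rewrite -[X in X - _]scale1r; apply: step.
by move=> m; apply: step.
Qed.

End TwoStageContraction.

Lemma two_stage_order_unit (R : realType) n (K : set 'cV[R]_n) (A U V F G : 'M[R]_n) u :
  is_cone K -> is_convex_set K -> closed K -> K 0 ->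
  K_regular_splitting K A U V -> convergent_splitting U V ->
  K_weak_regular_splitting_II K U F G -> convergent_splitting F G -> K u ->
  exists2 z, K z & z - G *m invmx F *m z - V *m invmx F *m z = u.
Proof.
move=> K_cone K_convex K_closed K0 [defA Uu KiU KV] rhoUV [defU Fu KiF KGF] rhoFG Ku.
have [_ KFiU] := splitting_K_nonneg_inv K_cone K_convex K_closed K0 Fu KGF rhoFG.
have [Au KUiA] := splitting_K_nonneg_inv K_cone K_convex K_closed K0 Uu
  (K_nonneg_mul KV KiU) rhoUV.
rewrite -defU in KFiU; rewrite -defA in Au KUiA.
exists (F *m (invmx A *m u)).
  by have := K_nonneg_mul KFiU KUiA Ku; rewrite -!mulmxA mulKmx.
by rewrite -!mulmxA mulKmx // -!mulmxBl -defU -defA mulmxA mulmxV // mul1mx.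
Qed.

Lemma two_stage_error_cvg0 (R : realType) n (K : set 'cV[R]_n) (A U V F G : 'M[R]_n)
    (s : nat -> nat) (e : nat -> 'cV[R]_n) :
  proper_cone K ->
  K_regular_splitting K A U V -> convergent_splitting U V ->
  K_weak_regular_splitting_II K U F G -> convergent_splitting F G ->
  (forall k, (0 < s k)%N) ->
  (forall k, e k.+1 = two_stage_mx (G *m invmx F) (V *m invmx F) (s k) *m e k) ->
  e @ \oo --> (0 : 'cV_n).
Proof.
move=> [K_cone K_closed K_convex K_pointed [u uK]] splitA rhoUV splitU rhoFG s_pos e_rec.
have Ku := interior_subset uK.
have K0 : K 0 by rewrite -(scale0r u); exact: K_cone.
have [_ _ _ KV] := splitA; have [_ _ KiF KGF] := splitU.
have [z Kz z_u] := two_stage_order_unit K_cone K_convex K_closed K0 splitA rhoUV splitU rhoFG Ku.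
set P := G *m invmx F in z_u e_rec KGF *; set Q := V *m invmx F in z_u e_rec *.
have KQ : K_nonneg K Q := K_nonneg_mul KV KiF.
have [eps /andP[eps0 eps1] Ku_eps] := interior_sub_scale K_cone K_convex z uK.
have Kz_theta : K ((1 - eps) *: z - P *m z - Q *m z).
  by rewrite scalerBl scale1r [X in X - Q *m z]addrAC (addrAC (z - P *m z)) z_u.
have [c c0 e0] := interior_order_interval K_cone K_convex (e 0%N) uK.
apply: (cone_contraction_cvg0 K_cone K_convex K_closed K_pointed (theta := 1 - eps)
  _ (ltW c0) _ _ e_rec).
- by rewrite subr_ge0 eps1 ltrBlDr ltrDl eps0.
- by move=> k; apply: K_nonneg_two_stage_mx.
- move=> k; rewrite -(prednK (s_pos k)).
  by apply: (two_stage_mx_contraction K_cone K_convex KGF Kz _ Kz_theta); rewrite lerBlDr lerDl ltW.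
- apply: (order_interval_widen K_cone K_convex _ e0); rewrite -scalerBr.
  apply: (K_cone _ _ (ltW c0)); rewrite -z_u -addrA -opprD subKr.
  by apply: (coneD K_cone K_convex); [exact: KGF | exact: KQ].
Qed.

Theorem theorem3p5 (R : realType) (n : nat) (K : set 'cV[R]_n)
    (A U V F G : 'M[R]_n) (b : 'cV[R]_n) :
  proper_cone K ->
  A \in unitmx ->
  K_regular_splitting K A U V -> convergent_splitting U V ->
  K_weak_regular_splitting_II K U F G -> convergent_splitting F G ->
  V *m invmx F *m G = G *m invmx F *m V ->
  forall (s : nat -> nat) (x : nat -> 'cV[R]_n),
    (forall k, (1 <= s k)%N) ->
    (forall k, x k.+1 =
        (invmx F *m G) ^+ (s k) *m x k
        + \sum_(j < s k) ((invmx F *m G) ^+ j *m invmx F *m (V *m x k + b))) ->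
    x @ \oo --> invmx A *m b.
Proof.
move=> K_proper Au splitA rhoUV splitU rhoFG _ s x s_pos x_rec.
have [defA _ _ _] := splitA; have [defU Fu _ _] := splitU.
set xs := invmx A *m b; pose e k := F *m (x k - xs).
have Axs : A *m xs = b by rewrite mulmxA mulmxV // mul1mx.
have e_cvg : e @ \oo --> (0 : 'cV_n).
  apply: (two_stage_error_cvg0 K_proper splitA rhoUV splitU rhoFG s_pos) => k.
  by rewrite /e x_rec (two_stage_error _ _ Fu defA defU Axs).
have -> : x = fun k => xs + invmx F *m e k.
  by apply: funext => k; rewrite /e mulKmx // addrC subrK.
by rewrite -[X in _ --> X]addr0; apply: cvgD; [exact: cvg_cst | exact: mulmx_cvg0].
Qed.
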